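(* Let $(J,\mathcal F)$ and $w^S_j>0$ be as in the context, and assume $w^S_j\le w^T_j$ whenever $j\in S\subset T$ with $S,T\in\mathcal F$. Let $\mathbf c$ be $\mathcal F$-admissible and let $\mathrm{AG}_2$ on input $\mathbf c$ produce $\boldsymbol\pi$, $\boldsymbol\nu$, $S_k$, $\nu^{S_k}_j$. Then for every $j\in J$, $$\nu_j=\max\{\nu^S_j: j\in S\in\{S_1,\dots,S_n\}\}.$$
   Context: $J$ finite, $|J|=n$; $\mathcal F\subseteq2^J$ with $\emptyset\in\mathcal F$, each nonempty $S\in\mathcal F$ having nonempty $\partial^-S=\{j\in S:S\setminus\{j\}\in\mathcal F\}$, each $S\in\mathcal F\ne J$ having $j\notin S$ with $S\cup\{j\}\in\mathcal F$. Coefficients $w^S_j>0$ for $j\in S\in\mathcal F$. $\mathrm{AG}_2$ on input $\mathbf c$: $S_1=J$, $\nu^{S_1}_j=c_j/w^{S_1}_j$, $\pi_1\in\arg\min\{\nu^{S_1}_j:j\in\partial^-S_1\}$, $\nu_{\pi_1}=\nu^{S_1}_{\pi_1}$; for $k=2..n$: $S_k=S_{k-1}\setminus\{\pi_{k-1}\}$, $\nu^{S_k}_j=\nu^{S_{k-1}}_j+(w^{S_{k-1}}_j/w^{S_k}_j-1)[\nu^{S_{k-1}}_j-\nu^{S_{k-1}}_{\pi_{k-1}}]$ ($j\in S_k$), $\pi_k\in\arg\min\{\nu^{S_k}_j:j\in\partial^-S_k\}$, $\nu_{\pi_k}=\nu^{S_k}_{\pi_k}$. $\mathbf c$ is $\mathcal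 F$-admissible if $\nu_{\pi_1}\le\cdots\le\nu_{\pi_n}$. *)

From mathcomp Require Import all_boot all_order all_algebra.
Set Implicit Arguments. Unset Strict Implicit. Unset Printing Implicit Defensive.
Import Order.TTheory GRing.Theory Num.Theory.
Local Open Scope ring_scope.

Section AG2.
Variables (R : realFieldType) (J : finType).

Definition set_system_ok (F : {set {set J}}) : Prop :=
  [/\ set0 \in F,
      (forall S, S \in F -> S != set0 -> exists2 j, j \in S & S :\ j \in F)
    & (forall S, S \in F -> S != setT -> exists2 j, j \notin S & j |: S \in F)].

Definition lower_boundary (F : {set {set J}}) (S : {set J}) : {set J} :=
  [set j in S | S :\ j \in F].

(* S_k of AG_2, 0-indexed: AG2_S pi 0 = J = S_1, AG2_S pi k = S_{k+1};
   pi k is \pi_{k+1}. *)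
Fixpoint AG2_S (pi : nat -> J) (k : nat) : {set J} :=
  match k with
  | 0 => setT
  | k'.+1 => AG2_S pi k' :\ pi k'
  end.

(* AG2_nu w c pi k j = \nu^{S_{k+1}}_j (0-indexed). *)
Fixpoint AG2_nu (w : {set J} -> J -> R) (c : J -> R) (pi : nat -> J)
    (k : nat) (j : J) : R :=
  match k with
  | 0 => c j / w setT j
  | k'.+1 =>
      AG2_nu w c pi k' j
      + (w (AG2_S pi k') j / w (AG2_S pi k) j - 1)
        * (AG2_nu w c pi k' j - AG2_nu w c pi k' (pi k'))
  end.

Definition AG2_run (F : {set {set J}}) (w : {set J} -> J -> R) (c : J -> R)
    (pi : nat -> J) : Prop :=
  forall k, (k < #|J|)%N ->
    pi k \in lower_boundary F (AG2_S pi k) /\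
    (forall j, j \in lower_boundary F (AG2_S pi k) ->
       AG2_nu w c pi k (pi k) <= AG2_nu w c pi k j).

Definition AG2_nu_out w c pi (k : nat) : R := AG2_nu w c pi k (pi k).

Definition admissible w c pi : Prop :=
  forall k, (k.+1 < #|J|)%N -> AG2_nu_out w c pi k <= AG2_nu_out w c pi k.+1.

End AG2.

From mathcomp Require Import all_boot all_order all_algebra.
From mathcomp Require Import ring.
Import Order.TTheory GRing.Theory Num.Theory.
Local Open Scope ring_scope.

(* Write j = pi_k and r_m = w^{S_m}_j / w^{S_{m+1}}_j, which is >= 1 by
   monotonicity of the weights. The update rule reads
   nu^{S_{m+1}}_j - nu_{pi_m} = r_m (nu^{S_m}_j - nu_{pi_m}), so once
   nu^{S_m}_j < nu_{pi_m}, admissibility keeps nu^{S_{m'}}_j < nu_{pi_m'} for all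
   later m' <= k, which is absurd at m' = k. Hence nu^{S_m}_j >= nu_{pi_m} for
   m <= k, so every update of nu_j up to step k is nonnegative, and
   j leaves the sets S_m right after step k. *)

Lemma setT_in_set_system (J : finType) (F : {set {set J}}) :
  set_system_ok F -> setT \in F.
Proof.
case=> F0 _ F_grow.
have [S SF S_max] := arg_maxnP (fun S : {set J} => #|S|) F0.
have [<- //|ST] := eqVneq S setT.
have [j jS jSF] := F_grow S SF ST.
by have := S_max _ jSF; rewrite cardsU1 jS add1n /= ltnn.
Qed.

Section AG2Sets.
Context {J : finType} (pi : nat -> J).

Lemma AG2_S_subset {m n} : (m <= n)%N -> AG2_S pi n \subset AG2_S pi m.
Proof.
elim: n => [|n IH]; first by rewrite leqn0 => /eqP ->.
rewrite leq_eqVlt ltnS => /predU1P [-> //|/IH]; apply: subset_trans.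
exact: subD1set.
Qed.

Lemma AG2_pi_notin_S m n : (m < n)%N -> pi m \notin AG2_S pi n.
Proof.
move=> mn; apply/negP => /(subsetP (AG2_S_subset mn)).
by rewrite /= !inE eqxx.
Qed.

End AG2Sets.

Lemma AG2_nuS_sub (R : realFieldType) (J : finType) (w : {set J} -> J -> R)
    (c : J -> R) (pi : nat -> J) m j :
  AG2_nu w c pi m.+1 j - AG2_nu_out w c pi m =
  w (AG2_S pi m) j / w (AG2_S pi m.+1) j
    * (AG2_nu w c pi m j - AG2_nu_out w c pi m).
Proof. by rewrite /= /AG2_nu_out; ring. Qed.

Section AG2Monotone.
Context {R : realFieldType} {J : finType} {F : {set {set J}}}.
Context {w : {set J} -> J -> R} {c : J -> R} { pi : nat -> J }.
Hypothesis setT_F : setT \in F.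
Hypothesis w_gt0 : forall S j, S \in F -> j \in S -> 0 < w S j.
Hypothesis w_homo : forall S T j, S \in F -> T \in F -> S \subset T ->
  j \in S -> w S j <= w T j.
Hypothesis run : AG2_run F w c pi.
Hypothesis adm : admissible w c pi.

Local Notation S := (AG2_S pi).
Local Notation nu := (AG2_nu w c pi).
Local Notation out := (AG2_nu_out w c pi).

Lemma AG2_pi_in_S {m} : (m < #|J|)%N -> pi m \in S m.
Proof. by case/run; rewrite inE => /andP []. Qed.

Lemma AG2_S_in_F {m} : (m <= #|J|)%N -> S m \in F.
Proof. by case: m => [//|m] /run []; rewrite inE => /andP []. Qed.

Lemma AG2_ratio_ge1 {m j} : (m < #|J|)%N -> j \in S m.+1 ->
  1 <= w (S m) j / w (S m.+1) j.
Proof.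
move=> mJ jS.
have SmF : S m \in F by apply/AG2_S_in_F/ltnW.
have SSmF : S m.+1 \in F by exact: AG2_S_in_F.
rewrite ler_pdivlMr ?mul1r; last exact: w_gt0.
exact: w_homo (subD1set _ _) jS.
Qed.

Lemma AG2_nu_lt_outS {m j} : (m.+1 < #|J|)%N -> j \in S m.+1 ->
  nu m j < out m -> nu m.+1 j < out m.+1.
Proof.
move=> mJ jS lt_nu_out; apply: (lt_le_trans _ (adm _ mJ)).
rewrite -subr_lt0 AG2_nuS_sub pmulr_rlt0 ?subr_lt0 //.
exact: lt_le_trans ltr01 (AG2_ratio_ge1 (ltnW mJ) jS).
Qed.

Lemma AG2_nu_lt_out_le {m k j} : (k < #|J|)%N -> (m <= k)%N -> j \in S k ->
  nu m j < out m -> nu k j < out k.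
Proof.
elim: k => [|k IH] kJ; first by rewrite leqn0 => /eqP ->.
rewrite leq_eqVlt ltnS => /predU1P [-> //|mk] jS lt_nu_out.
apply: AG2_nu_lt_outS => //; apply: IH => //; first exact: ltnW.
exact: subsetP (AG2_S_subset pi (leqnSn k)) _ jS.
Qed.

Lemma AG2_out_le_nu_pi {m k} : (k < #|J|)%N -> (m <= k)%N ->
  out m <= nu m (pi k).
Proof.
move=> kJ mk; rewrite leNgt; apply/negP.
move/(AG2_nu_lt_out_le kJ mk (AG2_pi_in_S kJ)).
by rewrite ltxx.
Qed.

Lemma AG2_nu_pi_homo {m n k} : (k < #|J|)%N -> (m <= n <= k)%N ->
  nu m (pi k) <= nu n (pi k).
Proof.
move=> kJ; elim: n => [|n IH]; first by rewrite leqn0 => /andP [/eqP ->].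
rewrite leq_eqVlt ltnS => /andP [/predU1P [-> //|mn] nk].
apply: le_trans (IH _) _; first by rewrite mn ltnW.
rewrite /= lerDl; apply: mulr_ge0.
- rewrite subr_ge0 AG2_ratio_ge1 ?(ltn_trans nk) //.
  exact: subsetP (AG2_S_subset pi nk) _ (AG2_pi_in_S kJ).
- by rewrite subr_ge0 (AG2_out_le_nu_pi kJ (ltnW nk)).
Qed.

End AG2Monotone.

Theorem theorem4 (R : realFieldType) (J : finType) (F : {set {set J}})
    (w : {set J} -> J -> R) (c : J -> R) (pi : nat -> J) :
  set_system_ok F ->
  (forall S j, S \in F -> j \in S -> 0 < w S j) ->
  (forall S T j, S \in F -> T \in F -> S \subset T -> j \in S ->
     w S j <= w T j) ->
  AG2_run F w c pi ->
  admissible w c pi ->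
  forall (j : J) (k : nat), (k < #|J|)%N -> pi k = j ->
    j \in AG2_S pi k /\
    (forall k', (k' < #|J|)%N -> j \in AG2_S pi k' ->
       AG2_nu w c pi k' j <= AG2_nu_out w c pi k).
Proof.
move=> /setT_in_set_system setT_F w_gt0 w_homo run adm j k kJ <-{j}.
split=> [|k' _ jS'].
  exact: (AG2_pi_in_S run kJ).
have k'k : (k' <= k)%N by rewrite leqNgt; apply: contraL jS'; apply: AG2_pi_notin_S.
apply: (AG2_nu_pi_homo setT_F w_gt0 w_homo run adm kJ).
by rewrite k'k leqnn.
Qed.
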